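(* Let $C\subseteq\mathbb{F}_q^n$ be a perfect code (binary or non-binary) with covering radius $\rho$. Then the set $C(\rho)$ of vectors at distance $\rho$ from $C$ has minimum distance $1$.
   Context: Hamming distance $d$; $d({\bf v},C)=\min_{{\bf x}\in C}d({\bf v},{\bf x})$; covering radius $\rho=\max_{\bf v}d({\bf v},C)$; $C(\rho)=\{{\bf v}\in\mathbb{F}_q^n: d({\bf v},C)=\rho\}$. For a code with minimum distance $d$, the packing radius is $e=\lfloor (d-1)/2\rfloor$; the code is perfect if $e=\rho$. Codes need not be linear. *)

From mathcomp Require Import all_boot all_order all_algebra.
Set Implicit Arguments. Unset Strict Implicit. Unset Printing Implicit Defensive.

Section Hamming.
Variables (F : finFieldType) (n : nat).

Definition hdist (x y : 'rV[F]_n) : nat := #|[set i : 'I_n | x ord0 i != y ord0 i]|.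

(* Minimum distance of a set S of vectors: the minimum of hdist x y over
   distinct x, y in S (equals the default n.+1 if S has fewer than 2 elements). *)
Definition mindist (S : {set 'rV[F]_n}) : nat :=
  \big[minn/n.+1]_(x in S) \big[minn/n.+1]_(y in S | y != x) hdist x y.

Definition dist_to (C : {set 'rV[F]_n}) (v : 'rV[F]_n) : nat :=
  \big[minn/n.+1]_(x in C) hdist v x.

Definition covering_radius (C : {set 'rV[F]_n}) : nat :=
  \max_(v : 'rV[F]_n) dist_to C v.

Definition at_dist (C : {set 'rV[F]_n}) (r : nat) : {set 'rV[F]_n} :=
  [set v | dist_to C v == r].

Definition packing_radius (C : {set 'rV[F]_n}) : nat := (mindist C).-1./2.

Definition perfect (C : {set 'rV[F]_n}) : Prop :=
  packing_radius C = covering_radius C.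

End Hamming.

From mathcomp Require Import all_boot all_order all_algebra.
From mathcomp Require Import zify.
Import Order.TTheory GRing.Theory.

Set Implicit Arguments.
Unset Strict Implicit.
Unset Printing Implicit Defensive.

(* Since [e = rho], distinct codewords are at distance at least [2 rho + 1].
   Flip the first [rho] coordinates of a codeword [c] to get [x], and the first
   [rho + 1] to get [y]; then [d(x, y) = 1].  Every other codeword is at distance
   at least [2 rho + 1 - (rho + 1) = rho] from [x] and [y], while [c] is at
   distance [rho] and [rho + 1]; as no vector is farther than [rho] from [C],
   both lie in [C(rho)]. *)

Section Hamming.
Variables (F : finFieldType) (n : nat).
Local Notation V := 'rV[F]_n.
Implicit Types (x y z c v : V) (S C : {set V}) (A B : {set 'I_n}).

Lemma hdist_sym x y : hdist x y = hdist y x.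
Proof. by apply: eq_card => i; rewrite !inE eq_sym. Qed.

Lemma hdist_triangle x y z : hdist x z <= hdist x y + hdist y z.
Proof.
apply: leq_trans (leq_card_setU _ _); apply: subset_leq_card.
apply/subsetP => i; rewrite !inE; apply: contraR; rewrite negb_or !negbK.
by case/andP=> /eqP -> /eqP ->.
Qed.

Lemma hdist_le x y : hdist x y <= n.
Proof. by apply: leq_trans (max_card _) _; rewrite card_ord. Qed.

Lemma hdist_eq0 x y : (hdist x y == 0) = (x == y).
Proof.
rewrite cards_eq0; apply/eqP/eqP => [xy | ->]; last by apply/setP => i; rewrite !inE eqxx.
by apply/rowP => j; move/setP/(_ j): xy; rewrite !inE => /negbFE/eqP.
Qed.

Lemma mindist_le S x y : x \in S -> y \in S -> x != y -> mindist S <= hdist x y.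
Proof.
move=> xS yS xy; rewrite /mindist -minEnat.
apply: leq_trans (@bigmin_le_cond _ nat _ _ x _ _ xS) _.
by apply: (@bigmin_le_cond _ nat); rewrite yS eq_sym.
Qed.

Lemma mindist_gt0 S : 0 < mindist S.
Proof.
rewrite /mindist -minEnat; apply: (@le_bigmin _ nat) => // x _.
apply: (@le_bigmin _ nat) => // y /andP[_ yx].
by rewrite leEnat lt0n hdist_eq0 eq_sym.
Qed.

Lemma mindist_eq1 S x y : x \in S -> y \in S -> hdist x y = 1 -> mindist S = 1.
Proof.
move=> xS yS dxy; have xy : x != y by rewrite -hdist_eq0 dxy.
by apply/eqP; rewrite eqn_leq mindist_gt0 -dxy mindist_le.
Qed.

Lemma dist_to_le_covering_radius C v : dist_to C v <= covering_radius C.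
Proof. exact: leq_bigmax. Qed.

Lemma double_packing_radius_lt_mindist S : (packing_radius S).*2 < mindist S.
Proof.
rewrite /packing_radius -[X in _ < X](prednK (mindist_gt0 S)) ltnS.
by rewrite -[X in _ <= X](odd_double_half (mindist S).-1) leq_addl.
Qed.

Lemma perfect_hdist C x y : perfect C -> x \in C -> y \in C -> x != y ->
  (covering_radius C).*2 < hdist x y.
Proof.
move=> perfC xC yC xy; rewrite -perfC.
exact: leq_trans (double_packing_radius_lt_mindist C) (mindist_le xC yC xy).
Qed.

Lemma mem_at_dist_covering_radius C c v : perfect C -> c \in C ->
  covering_radius C <= hdist v c <= (covering_radius C).+1 ->
  v \in at_dist C (covering_radius C).
Proof.
set r := covering_radius C => perfC cC /andP[r_le r_ge].
rewrite inE eqn_leq dist_to_le_covering_radius /dist_to -minEnat.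
apply: (@le_bigmin _ nat) => [|b bC]; rewrite leEnat.
  by rewrite (leq_trans r_le) // (leq_trans (hdist_le _ _)).
have [-> //|bc] := eqVneq b c.
have := perfect_hdist perfC bC cC bc; have := hdist_triangle b v c.
rewrite (hdist_sym b v) -addnn; lia.
Qed.

Definition shift_on c (A : {set 'I_n}) : V := \row_i (c ord0 i + (i \in A)%:R)%R.

Lemma hdist_shift_on c A B :
  hdist (shift_on c A) (shift_on c B) = #|[set i | (i \in A) != (i \in B)]|.
Proof.
apply: eq_card => i; rewrite !inE !mxE (inj_eq (addrI _)).
by case: (i \in A); case: (i \in B); rewrite ?eqxx // ?oner_eq0 // eq_sym oner_eq0.
Qed.

Lemma hdist_shift_on_set0 c A : hdist (shift_on c A) c = #|A|.
Proof.
have c0 : shift_on c set0 = c by apply/rowP => i; rewrite mxE in_set0 addr0.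
by rewrite -{2}c0 hdist_shift_on; apply: eq_card => i; rewrite !inE; case: (i \in A).
Qed.

Lemma hdist_shift_on_setU1 c A i : i \notin A ->
  hdist (shift_on c A) (shift_on c (i |: A)) = 1.
Proof.
move=> iA; rewrite hdist_shift_on -(cards1 i); apply: eq_card => j.
by rewrite !inE; have [-> | _] := eqVneq j i; rewrite ?(negPf iA) ?eqxx.
Qed.

End Hamming.

Lemma card_ord_lt n (k : 'I_n) : #|[set i : 'I_n | i < k]| = k.
Proof.
have k_le_n := ltnW (ltn_ord k).
have -> : [set i : 'I_n | i < k] = widen_ord k_le_n @: [set: 'I_k].
  apply/setP => i; rewrite inE; apply/idP/imsetP => [ik | [j _ ->]]; last exact: (ltn_ord j).
  by exists (Ordinal ik) => //; apply: val_inj.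
by rewrite card_imset ?cardsT ?card_ord // => i j /(congr1 val) /= /val_inj.
Qed.

Theorem lemma2p1 (F : finFieldType) (n : nat) (C : {set 'rV[F]_n}) :
  1 < #|C| -> perfect C ->
  mindist (at_dist C (covering_radius C)) = 1.
Proof.
move=> /card_gt1P[c [c' [cC c'C cc']]] perfC.
set r := covering_radius C.
have r_lt_n : r < n.
  have := perfect_hdist perfC cC c'C cc'; have := hdist_le c c'.
  rewrite -addnn; lia.
pose i := Ordinal r_lt_n; pose A := [set j : 'I_n | j < i].
have iA : i \notin A by rewrite inE ltnn.
have cardA : #|A| = r by rewrite card_ord_lt.
apply: (mindist_eq1 (x := shift_on c A) (y := shift_on c (i |: A))).
- apply: mem_at_dist_covering_radius perfC cC _.
  by rewrite hdist_shift_on_set0 cardA leqnn leqnSn.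
- apply: mem_at_dist_covering_radius perfC cC _.
  by rewrite hdist_shift_on_set0 cardsU1 iA cardA leqnSn leqnn.
- exact: hdist_shift_on_setU1.
Qed.
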